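(* Let $\mathbf{f} = (f_1, \ldots, f_m) : \mathcal{X} \to \mathcal{Y} \subset \mathbb{R}^m$ with $\mathcal{X} \subset \mathbb{R}^n$ be a multi-objective minimization problem whose ideal point $\mathbf{y}^* = (\min_{\mathbf{y} \in \mathcal{Y}^*} y_1, \ldots, \min_{\mathbf{y} \in \mathcal{Y}^*} y_m)$ is the zero vector, where $\mathcal{Y}^*$ is the Pareto front. Let $\mathbf{w} \in \mathbb{R}^m$ have positive entries and let $g_{\mathbf{w}}(\mathbf{x}) = \max_{1 \le j \le m} w_j |f_j(\mathbf{x}) - y^*_j|$ be the weighted Tchebycheff function with reference point the ideal point. Let $\mathbf{x}^1, \ldots, \mathbf{x}^{v(t)} \in \mathcal{X}$ be finitely many sampled points (with $v(t) \ge 1$), let $\mathbf{x}(t) \in \arg\min_{1 \le i \le v(t)} g_{\mathbf{w}}(\mathbf{x}^i)$, and let $$\mathcal{Y}^t_* = \{\mathbf{f}(\mathbf{x}^i) : 1 \le i \le v(t),\ \mathbf{f}(\mathbf{x}^k) \nprec \mathbf{f}(\mathbf{x}^i) \text{ for all } k \ne i\}.$$ Then $I^1_{\epsilon+}(\mathcal{Y}^t_* ) \le \max_j \frac{1}{w_j}\, g_{\mathbf{w}}(\mathbf{x}(t))$.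
   Context: Pareto dominance: $\mathbf{y}^1 \prec \mathbf{y}^2$ iff $y^1_j \le y^2_j$ for all $j$ and $y^1_k < y^2_k$ for some $k$. A vector $\hat{\mathbf{y}} \in \mathcal{Y}$ is Pareto optimal iff no $\mathbf{y} \in \mathcal{Y}$ satisfies $\mathbf{y} \prec \hat{\mathbf{y}}$; the set of Pareto optimal vectors is the Pareto front $\mathcal{Y}^*$. For sets $A, B \subseteq \mathbb{R}^m$, the additive $\epsilon$-indicator is $I_{\epsilon+}(A,B) = \inf\{\epsilon \in \mathbb{R} : \forall \mathbf{y}^2 \in B\ \exists \mathbf{y}^1 \in A \text{ with } y^1_j \le \epsilon + y^2_j \text{ for all } j\}$, and the unary version is $I^1_{\epsilon+}(A) = I_{\epsilon+}(A, \mathcal{Y}^* )$. *)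

From HB Require Import structures.
From mathcomp Require Import all_boot all_order all_algebra.
From mathcomp Require Import all_classical all_reals ereal.
Set Implicit Arguments. Unset Strict Implicit. Unset Printing Implicit Defensive.
Import Order.TTheory GRing.Theory Num.Theory.
Local Open Scope classical_set_scope.
Local Open Scope ring_scope.

Section Defs.
Variable R : realType.

Definition dominates (m : nat) (y1 y2 : 'rV[R]_m) : Prop :=
  (forall j : 'I_m, y1 ord0 j <= y2 ord0 j) /\ (exists k : 'I_m, y1 ord0 k < y2 ord0 k).

Definition pareto_front (m : nat) (Y : set 'rV[R]_m) : set 'rV[R]_m :=
  [set yh | Y yh /\ ~ (exists y, Y y /\ dominates y yh)].

Definition is_ideal_point (m : nat) (F : set 'rV[R]_m) (ystar : 'rV[R]_m) : Prop :=
  forall j : 'I_m, (exists y, F y /\ y ord0 j = ystar ord0 j) /\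
                   (forall y, F y -> ystar ord0 j <= y ord0 j).

Definition eps_indicator (m : nat) (A B : set 'rV[R]_m) : \bar R :=
  ereal_inf [set (e%:E)%E | e in
    [set e : R | forall y2, B y2 -> exists y1, A y1 /\
        forall j : 'I_m, y1 ord0 j <= e + y2 ord0 j]].

Definition eps_indicator1 (m : nat) (A front : set 'rV[R]_m) : \bar R :=
  eps_indicator A front.

(* weighted Tchebycheff function with reference point r
   (max over j; all terms are >= 0, so the default 0 is harmless) *)
Definition tcheb (n m : nat) (w : 'rV[R]_m) (f : 'rV[R]_n -> 'rV[R]_m)
  (r : 'rV[R]_m) (x : 'rV[R]_n) : R :=
  \big[Num.max/0]_(j < m) (w ord0 j * `|f x ord0 j - r ord0 j|).

Definition sampled_front (n m v : nat) (f : 'rV[R]_n -> 'rV[R]_m)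
  (xs : 'I_v -> 'rV[R]_n) : set 'rV[R]_m :=
  [set y | exists i : 'I_v, y = f (xs i) /\
     forall k : 'I_v, k != i -> ~ dominates (f (xs k)) (f (xs i))].

End Defs.

(* Every sampled objective vector, in particular f(x(t)), is weakly dominated by
   a nondominated sampled vector: among the samples weakly dominating it take
   one with least coordinate sum.  Since w_j g_w(x(t)) >= w_j |f_j(x(t))| each
   coordinate of that vector is at most max_j g_w(x(t)) / w_j, while the ideal
   point 0 makes every Pareto optimal vector nonnegative; so this maximum is an
   admissible epsilon. *)
From HB Require Import structures.
From mathcomp Require Import all_boot all_order all_algebra.
From mathcomp Require Import all_classical all_reals ereal.
Set Implicit Arguments. Unset Strict Implicit. Unset Printing Implicit Defensive.
Import Order.TTheory GRing.Theory Num.Theory.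
Local Open Scope classical_set_scope.
Local Open Scope ring_scope.

Section ParetoDominance.
Variables (R : realType) (m : nat).

Definition weakly_dominates (y1 y2 : 'rV[R]_m) : bool :=
  [forall j, y1 ord0 j <= y2 ord0 j].

Definition coord_sum (y : 'rV[R]_m) : R := \sum_(j < m) y ord0 j.

Lemma dominates_weakly (y1 y2 : 'rV[R]_m) :
  dominates y1 y2 -> weakly_dominates y1 y2.
Proof. by move=> [le12 _]; apply/forallP. Qed.

Lemma weakly_dominates_trans : transitive weakly_dominates.
Proof.
move=> y2 y1 y3 /forallP le12 /forallP le23.
by apply/forallP => j; exact: le_trans (le12 j) (le23 j).
Qed.

Lemma dominates_coord_sum_lt (y1 y2 : 'rV[R]_m) :
  dominates y1 y2 -> coord_sum y1 < coord_sum y2.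
Proof.
move=> [le12 [k lt12]]; rewrite /coord_sum (bigD1 k) //= [ltRHS](bigD1 k) //=.
by apply: ltr_leD => //; apply: ler_sum => j _.
Qed.

End ParetoDominance.

Lemma sampled_front_weakly_dominates (R : realType) (n m v : nat)
    (f : 'rV[R]_n -> 'rV[R]_m) (xs : 'I_v -> 'rV[R]_n) (i0 : 'I_v) :
  exists2 i, sampled_front f xs (f (xs i)) &
             weakly_dominates (f (xs i)) (f (xs i0)).
Proof.
pose below := [pred i | weakly_dominates (f (xs i)) (f (xs i0))].
have below_i0 : below i0 by apply/forallP => j.
have [i below_i sum_min] := arg_minP (fun i => coord_sum (f (xs i))) below_i0.
exists i => //; exists i; split => // k _ dom_ki.
have below_k : below k.
  exact: weakly_dominates_trans (dominates_weakly dom_ki) below_i.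
by have := sum_min k below_k; rewrite leNgt dominates_coord_sum_lt.
Qed.

Lemma tcheb_ge (R : realType) (n m : nat) (w : 'rV[R]_m)
    (f : 'rV[R]_n -> 'rV[R]_m) (r : 'rV[R]_m) (x : 'rV[R]_n) (j : 'I_m) :
  w ord0 j * `|f x ord0 j - r ord0 j| <= tcheb w f r x.
Proof. exact: le_bigmax. Qed.

Lemma coord_le_tcheb0 (R : realType) (n m : nat) (w : 'rV[R]_m)
    (f : 'rV[R]_n -> 'rV[R]_m) (x : 'rV[R]_n) (j : 'I_m) :
  0 < w ord0 j -> f x ord0 j <= (w ord0 j)^-1 * tcheb w f 0 x.
Proof.
move=> wj_gt0; rewrite ler_pdivlMl //.
apply: le_trans (tcheb_ge w f 0 x j); rewrite mxE subr0 ler_pM2l //.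
exact: real_ler_norm (num_real _).
Qed.

Lemma ideal_point_le (R : realType) (m : nat) (F : set 'rV[R]_m)
    (ystar y : 'rV[R]_m) (j : 'I_m) :
  is_ideal_point F ystar -> F y -> ystar ord0 j <= y ord0 j.
Proof. by move=> /(_ j) [_ ystar_min]; exact: ystar_min. Qed.

Lemma eps_indicator_le (R : realType) (m : nat) (A B : set 'rV[R]_m) (e : R) :
  (forall y2, B y2 -> exists y1, A y1 /\ forall j, y1 ord0 j <= e + y2 ord0 j) ->
  (eps_indicator A B <= e%:E)%E.
Proof. by move=> e_ok; apply: ereal_inf_lbound; exists e. Qed.

Theorem theorem3 (R : realType) (n m : nat)
  (X : set 'rV[R]_n) (f : 'rV[R]_n -> 'rV[R]_m)
  (hideal : is_ideal_point (pareto_front (f @` X)) 0)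
  (w : 'rV[R]_m) (hw : forall j : 'I_m, 0 < w ord0 j)
  (v : nat) (hv : (0 < v)%N) (xs : 'I_v -> 'rV[R]_n)
  (hxs : forall i : 'I_v, X (xs i))
  (it : 'I_v)
  (hit : forall i : 'I_v, tcheb w f 0 (xs it) <= tcheb w f 0 (xs i)) :
  (eps_indicator1 (sampled_front f xs) (pareto_front (f @` X))
    <= (\big[Num.max/0]_(j < m) ((w ord0 j)^-1 * tcheb w f 0 (xs it)))%:E)%E.
Proof.
set D := \big[Num.max/0]_(j < m) _.
have [i front_i /forallP le_it] := sampled_front_weakly_dominates f xs it.
apply: eps_indicator_le => y2 front_y2; exists (f (xs i)); split => // j.
have y2_ge0 : 0 <= y2 ord0 j by have := ideal_point_le j hideal front_y2; rewrite mxE.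
rewrite -[f _ _ _]addr0; apply: lerD y2_ge0.
apply: le_trans (le_it j) (le_trans (coord_le_tcheb0 f (xs it) (hw j)) _).
exact: le_bigmax.
Qed.
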